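(* Let $k>0$ and $g(u;a)=u(1-u)(u-a)$. Define $$a_*^-(k)=1-\frac{2}{\sqrt{4k+1}+1},\qquad a_1^-(k)=\max\Big\{1-\frac{2}{2\sqrt k+1},0\Big\},$$ and for $0\le a\le a_*^-(k)$, $$d^-_{\min}(a,k)=\frac{2a^2k-a+2k-2(a+1)\sqrt k\sqrt{ka^2-a(2k+1)+k}}{(4k+1)^2},$$ $$d^-_{\max}(a,k)=\begin{cases}\dfrac{(1-a)^2}{4}, & a\in[0,a_1^-(k)),\\[2mm] \dfrac{2a^2k-a+2k+2(a+1)\sqrt k\sqrt{ka^2-a(2k+1)+k}}{(4k+1)^2}, & a\in[a_1^-(k),a_*^-(k)].\end{cases}$$ Then: (i) $d^-_{\min},d^-_{\max}\in C([0,a_*^-(k)]\times(0,\infty);\mathbb R)$ and $0\le d^-_{\min}(a,k)\le d^-_{\max}(a,k)\le d^-(a)$ for all $a\in[0,a_*^-(k)]$, where $d^-(a)=\max_{y\in(a,1)}g(y;a)/y$; (ii) $d^-_{\max}(a_*^-(k),k)=d^-_{\min}(a_*^-(k),k)$; (iii) $$\mathcal D^-(k)=\{(a,d)\in\mathcal H:\ a<a_*^-(k),\ d^-_{\min}(a,k)<d<d^-_{\max}(a,k)\}.$$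
   Context: Let $\mathcal H=(0,1)\times(0,\infty)$. For $k>0$, $a\in(0,1)$, $A\in(0,1)$ let $$d^\diamond(A;a)=\inf\{d>0:\ d(k+1)(A-v)-g(A;a)\ge -g(v;a)\ \text{for all }v\in[0,A]\},$$ and $$\mathcal D^-(k)=\Big\{(a,d)\in\mathcal H:\ d^\diamond(A;a)<d<\frac{g(A;a)}{A}\ \text{for some }A\in(a,1)\Big\},$$ with $g$ the cubic above. *)

From Stdlib Require Import Reals Lra.
From Coquelicot Require Import Coquelicot.
Open Scope R_scope.

Definition g (u a : R) : R := u * (1 - u) * (u - a).

(* d^-(a) = max_{y in (a,1)} g(y;a)/y, taken as the supremum (it is attained). *)
Definition dminus (a : R) : R :=
  real (Lub_Rbar (fun z => exists y, a < y < 1 /\ z = g y a / y)).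

Definition ddiamond (k A a : R) : Rbar :=
  Glb_Rbar (fun d => 0 < d /\
    forall v, 0 <= v <= A -> d * (k + 1) * (A - v) - g A a >= - g v a).

Definition inH (a d : R) : Prop := 0 < a < 1 /\ 0 < d.

Definition Dset_minus (k a d : R) : Prop :=
  inH a d /\ exists A, a < A < 1 /\ Rbar_lt (ddiamond k A a) (Finite d) /\ d < g A a / A.

Definition a_star (k : R) : R := 1 - 2 / (sqrt (4 * k + 1) + 1).
Definition a_one (k : R) : R := Rmax (1 - 2 / (2 * sqrt k + 1)) 0.

Definition dmin (a k : R) : R :=
  (2 * a ^ 2 * k - a + 2 * k
     - 2 * (a + 1) * sqrt k * sqrt (k * a ^ 2 - a * (2 * k + 1) + k))
  / (4 * k + 1) ^ 2.

Definition dmax (a k : R) : R :=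
  if Rlt_dec a (a_one k) then (1 - a) ^ 2 / 4
  else (2 * a ^ 2 * k - a + 2 * k
     + 2 * (a + 1) * sqrt k * sqrt (k * a ^ 2 - a * (2 * k + 1) + k))
  / (4 * k + 1) ^ 2.

Definition dom_ak (a k : R) : Prop := 0 < k /\ 0 <= a <= a_star k.

Definition cont_on2 (S : R -> R -> Prop) (f : R -> R -> R) : Prop :=
  forall a k, S a k -> forall eps, 0 < eps -> exists delta, 0 < delta /\
    forall a' k', S a' k' -> Rabs (a' - a) < delta -> Rabs (k' - k) < delta ->
      Rabs (f a' k' - f a k) < eps.

(* Since g(A;a) - g(v;a) = (A - v) q(v) with q a concave quadratic, d exceeds d^⋄(A;a)
   iff (k+1) d exceeds the maximum of q on [0,A].  For A >= (1+a)/3 this is the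
   unconstrained maximum S(A); a smaller A can be replaced by 1+a-A, which has the same
   g(A;a)/A = (1-A)(A-a) and a smaller S.  So (a,d) lies in D^-(k) iff
   S(A) < (k+1) d < (k+1)(1-A)(A-a) for some A in (a,1).
   The quadratic S(A) - (k+1)(1-A)(A-a) has discriminant k (k a^2 - a(2k+1) + k) up to a
   positive factor, which is positive exactly for a < a_*^-(k).  Between its roots
   A_- <= A_+ both S and (1-A)(A-a) decrease on [M, A_+], M = max(A_-, (1+a)/2), so the
   admissible d fill the interval from (1-A_+)(A_+-a) = d_min to (1-M)(M-a) = d_max;
   A_- crosses (1+a)/2 exactly at a = a_1^-(k), which is where the formula for d_max
   switches, and the expression through M shows that d_max is continuous. *)

From Stdlib Require Import Reals Lra Psatz Classical.
From Coquelicot Require Import Coquelicot.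
Open Scope R_scope.

Definition gdiv (a u : R) : R := (1 - u) * (u - a).

Definition secant (a A v : R) : R := (1 + a) * (A + v) - (A ^ 2 + A * v + v ^ 2) - a.

Definition secant_sup (a A : R) : R := ((1 + a) - A) * (3 * A + (1 + a)) / 4 - a.

Definition disc (a k : R) : R := k * a ^ 2 - a * (2 * k + 1) + k.

Definition root_gap (a k : R) : R := sqrt k * sqrt (disc a k).

Definition root_lo (a k : R) : R := ((1 + a) * (2 * k + 1) - 2 * root_gap a k) / (4 * k + 1).

Definition root_hi (a k : R) : R := ((1 + a) * (2 * k + 1) + 2 * root_gap a k) / (4 * k + 1).

Lemma g_div_eq_gdiv a u : u <> 0 -> g u a / u = gdiv a u.
Proof. intros Hu. unfold g, gdiv. field. exact Hu. Qed.

Lemma gdiv_le_max a u : gdiv a u <= (1 - a) ^ 2 / 4.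
Proof.
  assert (E : (1 - a) ^ 2 / 4 - gdiv a u = (u - (1 + a) / 2) ^ 2) by (unfold gdiv; field).
  pose proof (pow2_ge_0 (u - (1 + a) / 2)). lra.
Qed.

Lemma gdiv_mid a : gdiv a ((1 + a) / 2) = (1 - a) ^ 2 / 4.
Proof. unfold gdiv. field. Qed.

Lemma gdiv_reflect a u : gdiv a (1 + a - u) = gdiv a u.
Proof. unfold gdiv. ring. Qed.

Lemma gdiv_antitone a x y : (1 + a) / 2 <= x <= y -> gdiv a y <= gdiv a x.
Proof. intros. unfold gdiv. nra. Qed.

Lemma gdiv_decreasing a x y : (1 + a) / 2 <= x < y -> gdiv a y < gdiv a x.
Proof. intros. unfold gdiv. nra. Qed.

Lemma gdiv_le_Rmax a x u : x <= u -> gdiv a u <= gdiv a (Rmax x ((1 + a) / 2)).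
Proof.
  intros Hxu. unfold Rmax. destruct (Rle_dec x ((1 + a) / 2)).
  - rewrite gdiv_mid. apply gdiv_le_max.
  - apply gdiv_antitone. lra.
Qed.

Lemma gdiv_root a d : a < 1 -> 0 < d <= (1 - a) ^ 2 / 4 ->
  exists b, (1 + a) / 2 <= b < 1 /\ gdiv a b = d.
Proof.
  intros Ha Hd.
  assert (HD : sqrt ((1 - a) ^ 2 - 4 * d) ^ 2 = (1 - a) ^ 2 - 4 * d) by (apply pow2_sqrt; lra).
  pose proof (sqrt_pos ((1 - a) ^ 2 - 4 * d)).
  set (r := sqrt ((1 - a) ^ 2 - 4 * d)) in *.
  exists ((1 + a + r) / 2). split; [split|].
  - lra.
  - assert (r < 1 - a); [|lra].
    apply Rnot_le_lt. intros Hge. assert ((1 - a) ^ 2 <= r ^ 2) by (apply pow_incr; lra). lra.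
  - unfold gdiv. replace d with (((1 - a) ^ 2 - r ^ 2) / 4) by lra. field.
Qed.

Lemma g_sub_secant a A v : g A a - g v a = (A - v) * secant a A v.
Proof. unfold g, secant. ring. Qed.

Lemma secant_le_sup a A v : secant a A v <= secant_sup a A.
Proof.
  assert (E : secant_sup a A - secant a A v = (v - (1 + a - A) / 2) ^ 2)
    by (unfold secant, secant_sup; field).
  pose proof (pow2_ge_0 (v - (1 + a - A) / 2)). lra.
Qed.

Lemma secant_argmax a A : secant a A ((1 + a - A) / 2) = secant_sup a A.
Proof. unfold secant, secant_sup. field. Qed.

(* When [3 A <= 1 + a] the maximiser [(1 + a - A) / 2] of [secant a A] lies outside [0, A);
   the reflected point [1 + a - A] has the same [gdiv] and a smaller [secant_sup]. *)
Lemma secant_sup_reflect a A : 0 <= A -> 2 * A <= 1 + a ->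
  secant_sup a (1 + a - A) <= secant a A (A / 2).
Proof.
  intros. assert (E : secant a A (A / 2) - secant_sup a (1 + a - A) = A / 2 * (1 + a - 2 * A))
    by (unfold secant, secant_sup; field).
  assert (0 <= A / 2 * (1 + a - 2 * A)) by (apply Rmult_le_pos; lra). lra.
Qed.

Lemma secant_sup_antitone a x y : (1 + a) / 3 <= y -> 2 * (1 + a) / 3 - y <= x <= y ->
  secant_sup a y <= secant_sup a x.
Proof. intros. unfold secant_sup. nra. Qed.

Lemma root_gap_nonneg a k : 0 <= root_gap a k.
Proof. unfold root_gap. apply Rmult_le_pos; apply sqrt_pos. Qed.

Lemma root_gap_sq a k : 0 <= k -> 0 <= disc a k -> root_gap a k ^ 2 = k * disc a k.
Proof. intros. unfold root_gap. rewrite Rpow_mult_distr, !pow2_sqrt; auto. Qed.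

Lemma secant_sup_sub_gdiv a k A : 0 < k -> 0 <= disc a k ->
  secant_sup a A - (k + 1) * gdiv a A = (k + / 4) * (A - root_lo a k) * (A - root_hi a k).
Proof.
  intros Hk Hd. pose proof (root_gap_sq a k ltac:(lra) Hd) as Hsq.
  unfold root_lo, root_hi. set (t := root_gap a k) in *.
  apply Rminus_diag_uniq.
  transitivity ((t ^ 2 - k * disc a k) / (4 * k + 1)).
  - unfold secant_sup, gdiv, disc. field. lra.
  - rewrite Hsq. field. lra.
Qed.

Lemma secant_sup_ge_gdiv a k A : 0 < k -> disc a k <= 0 ->
  (k + 1) * gdiv a A <= secant_sup a A.
Proof.
  intros Hk Hd.
  assert (E : 4 * (k + / 4) * (secant_sup a A - (k + 1) * gdiv a A)
              = (2 * (k + / 4) * A - (1 + a) * (k + / 2)) ^ 2 - k * disc a k)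
    by (unfold secant_sup, gdiv, disc; field).
  pose proof (pow2_ge_0 (2 * (k + / 4) * A - (1 + a) * (k + / 2))).
  assert (0 <= 4 * (k + / 4) * (secant_sup a A - (k + 1) * gdiv a A)) by nra.
  nra.
Qed.

Lemma root_lo_le_root_hi a k : 0 < k -> root_lo a k <= root_hi a k.
Proof.
  intros Hk. pose proof (root_gap_nonneg a k). unfold root_lo, root_hi.
  apply Rmult_le_compat_r; [apply Rlt_le, Rinv_0_lt_compat; lra | lra].
Qed.

Lemma root_lo_eq_root_hi a k : disc a k = 0 -> root_lo a k = root_hi a k.
Proof. intros Hd. unfold root_lo, root_hi, root_gap. rewrite Hd, sqrt_0. f_equal. ring. Qed.

Lemma mid_le_root_hi a k : 0 < k -> 0 <= a -> (1 + a) / 2 <= root_hi a k.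
Proof.
  intros Hk Ha. pose proof (root_gap_nonneg a k). unfold root_hi.
  apply (Rmult_le_reg_r (4 * k + 1)); [lra|]. field_simplify; [nra|lra].
Qed.

Lemma root_hi_le_1 a k : 0 < k -> 0 <= a <= 1 -> 0 <= disc a k -> root_hi a k <= 1.
Proof.
  intros Hk Ha Hd. pose proof (root_gap_sq a k ltac:(lra) Hd). pose proof (root_gap_nonneg a k).
  set (X := 2 * k - a * (2 * k + 1)).
  assert (HX : 0 <= X) by (unfold X, disc in *; nra).
  assert (HX2 : 4 * root_gap a k ^ 2 <= X ^ 2) by (unfold X, disc in *; nra).
  assert (2 * root_gap a k <= X) by nra.
  unfold root_hi. apply (Rmult_le_reg_r (4 * k + 1)); [lra|].
  field_simplify; [unfold X in *; nra | lra].
Qed.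

Lemma root_sum_ge a k : 0 < k -> -1 <= a -> 2 * (1 + a) / 3 <= root_lo a k + root_hi a k.
Proof.
  intros Hk Ha. unfold root_lo, root_hi.
  apply (Rmult_le_reg_r (4 * k + 1)); [lra|]. field_simplify; [nra|lra].
Qed.

Lemma secant_sup_lt_gdiv_iff a k A : 0 < k -> 0 <= disc a k ->
  secant_sup a A < (k + 1) * gdiv a A <-> root_lo a k < A < root_hi a k.
Proof.
  intros Hk Hd. pose proof (secant_sup_sub_gdiv a k A Hk Hd).
  pose proof (root_lo_le_root_hi a k Hk). split.
  - intros Hlt. assert ((A - root_lo a k) * (A - root_hi a k) < 0) by nra. nra.
  - intros HA. assert ((A - root_lo a k) * (A - root_hi a k) < 0) by nra. nra.
Qed.

Lemma secant_sup_root_hi a k : 0 < k -> 0 <= disc a k ->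
  secant_sup a (root_hi a k) = (k + 1) * gdiv a (root_hi a k).
Proof.
  intros Hk Hd. pose proof (secant_sup_sub_gdiv a k (root_hi a k) Hk Hd). nra.
Qed.

(* [t = root_gap a k] gives [root_hi], [t = - root_gap a k] gives [root_lo]. *)
Lemma gdiv_at_root a k t : 0 < k -> t ^ 2 = k * disc a k ->
  gdiv a (((1 + a) * (2 * k + 1) + 2 * t) / (4 * k + 1))
  = (2 * a ^ 2 * k - a + 2 * k - 2 * (a + 1) * t) / (4 * k + 1) ^ 2.
Proof.
  intros Hk Ht.
  set (X := 2 * k - a * (2 * k + 1)). set (Y := 2 * k + 1 - 2 * a * k).
  transitivity ((X - 2 * t) * (Y + 2 * t) / (4 * k + 1) ^ 2).
  - unfold gdiv, X, Y. field. lra.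
  - f_equal. transitivity (X * Y + 2 * t * (X - Y) - 4 * t ^ 2); [ring|].
    rewrite Ht. unfold X, Y, disc. ring.
Qed.

Lemma gdiv_root_hi a k : 0 < k -> 0 <= disc a k -> gdiv a (root_hi a k) = dmin a k.
Proof.
  intros Hk Hd. unfold root_hi. rewrite (gdiv_at_root a k); [|lra|apply root_gap_sq; lra].
  unfold dmin, root_gap, disc. f_equal. ring.
Qed.

Lemma gdiv_root_lo a k : 0 < k -> 0 <= disc a k ->
  gdiv a (root_lo a k)
  = (2 * a ^ 2 * k - a + 2 * k
       + 2 * (a + 1) * sqrt k * sqrt (k * a ^ 2 - a * (2 * k + 1) + k)) / (4 * k + 1) ^ 2.
Proof.
  intros Hk Hd. unfold root_lo.
  replace ((1 + a) * (2 * k + 1) - 2 * root_gap a k)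
    with ((1 + a) * (2 * k + 1) + 2 * - root_gap a k) by ring.
  rewrite (gdiv_at_root a k); [|lra|].
  - unfold root_gap, disc. f_equal. ring.
  - replace ((- root_gap a k) ^ 2) with (root_gap a k ^ 2) by ring. apply root_gap_sq; lra.
Qed.

Lemma sqrt_4k1_gt_1 k : 0 < k -> 1 < sqrt (4 * k + 1).
Proof.
  intros Hk. rewrite <- sqrt_1 at 1. apply sqrt_lt_1; lra.
Qed.

Lemma disc_factor k a : 0 < k ->
  4 * disc a k
  = (((sqrt (4 * k + 1) + 1) - (sqrt (4 * k + 1) - 1) * a) * (sqrt (4 * k + 1) + 1))
    * (a_star k - a).
Proof.
  intros Hk. pose proof (sqrt_4k1_gt_1 k Hk).
  assert (Hs : sqrt (4 * k + 1) ^ 2 = 4 * k + 1) by (apply pow2_sqrt; lra).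
  unfold a_star. set (s := sqrt (4 * k + 1)) in *.
  replace k with ((s ^ 2 - 1) / 4) by lra. unfold disc. field. lra.
Qed.

Lemma disc_pos_iff k a : 0 < k -> a <= 1 -> 0 < disc a k <-> a < a_star k.
Proof.
  intros Hk Ha. pose proof (disc_factor k a Hk). pose proof (sqrt_4k1_gt_1 k Hk).
  set (s := sqrt (4 * k + 1)) in *. clearbody s.
  assert (Hc : 0 < (s + 1 - (s - 1) * a) * (s + 1)).
  { apply Rmult_lt_0_compat; [|lra].
    assert (0 <= (s - 1) * (1 - a)) by (apply Rmult_le_pos; lra). lra. }
  set (c := (s + 1 - (s - 1) * a) * (s + 1)) in *. clearbody c.
  split; intros; nra.
Qed.

Lemma disc_nonneg_iff k a : 0 < k -> a <= 1 -> 0 <= disc a k <-> a <= a_star k.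
Proof.
  intros Hk Ha. pose proof (disc_factor k a Hk). pose proof (sqrt_4k1_gt_1 k Hk).
  set (s := sqrt (4 * k + 1)) in *. clearbody s.
  assert (Hc : 0 < (s + 1 - (s - 1) * a) * (s + 1)).
  { apply Rmult_lt_0_compat; [|lra].
    assert (0 <= (s - 1) * (1 - a)) by (apply Rmult_le_pos; lra). lra. }
  set (c := (s + 1 - (s - 1) * a) * (s + 1)) in *. clearbody c.
  split; intros; nra.
Qed.

Lemma disc_a_star k : 0 < k -> disc (a_star k) k = 0.
Proof. intros Hk. pose proof (disc_factor k (a_star k) Hk). lra. Qed.

Lemma a_star_bounds k : 0 < k -> 0 < a_star k < 1.
Proof.
  intros Hk. pose proof (sqrt_4k1_gt_1 k Hk). unfold a_star.
  assert (0 < 2 / (sqrt (4 * k + 1) + 1) < 1); [|lra].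
  split; [apply Rdiv_lt_0_compat; lra|].
  apply (Rmult_lt_reg_r (sqrt (4 * k + 1) + 1)); [lra|]. field_simplify; lra.
Qed.

Lemma a_one_le_iff k a : 0 < k -> 0 <= a ->
  a_one k <= a <-> (1 - a) * (2 * sqrt k + 1) <= 2.
Proof.
  intros Hk Ha. pose proof (sqrt_pos k) as Hp. unfold a_one.
  assert (Hq : 2 / (2 * sqrt k + 1) * (2 * sqrt k + 1) = 2) by (field; lra).
  set (q := 2 / (2 * sqrt k + 1)) in *. clearbody q.
  split; intros H.
  - pose proof (Rmax_l (1 - q) 0). nra.
  - apply Rmax_lub; nra.
Qed.

Lemma mid_le_root_lo_iff k a : 0 < k -> 0 <= a <= 1 -> 0 <= disc a k ->
  (1 + a) / 2 <= root_lo a k <-> a_one k <= a.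
Proof.
  intros Hk Ha Hd. rewrite a_one_le_iff by lra.
  pose proof (root_gap_sq a k ltac:(lra) Hd) as Hsq. pose proof (root_gap_nonneg a k) as Ht.
  pose proof (pow2_sqrt k ltac:(lra)) as Hp. pose proof (sqrt_pos k) as Hp0.
  assert (Hmid : (1 + a) / 2 <= root_lo a k <-> 4 * root_gap a k <= 1 + a).
  { assert (E : root_lo a k - (1 + a) / 2 = ((1 + a) - 4 * root_gap a k) / (2 * (4 * k + 1)))
      by (unfold root_lo; field; lra).
    split; intros H.
    - assert (0 <= ((1 + a) - 4 * root_gap a k) * / (2 * (4 * k + 1))) by (unfold Rdiv in E; lra).
      assert (0 < / (2 * (4 * k + 1))) by (apply Rinv_0_lt_compat; lra). nra.
    - assert (0 <= ((1 + a) - 4 * root_gap a k) / (2 * (4 * k + 1)))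
        by (apply Rdiv_le_0_compat; lra). lra. }
  assert (Hid : (1 + a) ^ 2 - 16 * root_gap a k ^ 2
                = (2 - (1 - a) * (2 * sqrt k + 1)) * ((4 * k + 1) * (2 + (1 - a) * (2 * sqrt k - 1)))).
  { replace ((2 - (1 - a) * (2 * sqrt k + 1)) * ((4 * k + 1) * (2 + (1 - a) * (2 * sqrt k - 1))))
      with ((4 * k + 1) * ((1 + a) ^ 2 - 4 * sqrt k ^ 2 * (1 - a) ^ 2)) by ring.
    rewrite Hsq, Hp. unfold disc. ring. }
  assert (Hpos : 0 < (4 * k + 1) * (2 + (1 - a) * (2 * sqrt k - 1))).
  { assert (0 <= (1 - a) * sqrt k) by (apply Rmult_le_pos; lra).
    apply Rmult_lt_0_compat; lra. }
  rewrite Hmid. revert Hid Hpos Ht. generalize (root_gap a k) (sqrt k). intros t p Hid Hpos Ht.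
  set (Q := (4 * k + 1) * (2 + (1 - a) * (2 * p - 1))) in *. clearbody Q.
  split; intros H; nra.
Qed.

Lemma dmax_eq a k : 0 < k -> 0 <= a <= a_star k ->
  dmax a k = gdiv a (Rmax (root_lo a k) ((1 + a) / 2)).
Proof.
  intros Hk Ha. pose proof (a_star_bounds k Hk).
  assert (Hd : 0 <= disc a k) by (apply disc_nonneg_iff; lra).
  pose proof (mid_le_root_lo_iff k a Hk ltac:(lra) Hd) as Hmid.
  unfold dmax. destruct (Rlt_dec a (a_one k)) as [Hlt | Hge].
  - rewrite Rmax_right by (apply Rlt_le, Rnot_le_lt; rewrite Hmid; lra).
    symmetry. apply gdiv_mid.
  - rewrite Rmax_left by (apply Hmid; lra).
    symmetry. apply gdiv_root_lo; lra.
Qed.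

Lemma dminus_eq a : 0 <= a < 1 -> dminus a = (1 - a) ^ 2 / 4.
Proof.
  intros Ha. unfold dminus.
  rewrite (is_lub_Rbar_unique _ (Finite ((1 - a) ^ 2 / 4))); [reflexivity|]. split.
  - intros z [y [Hy ->]]. simpl. rewrite g_div_eq_gdiv by lra. apply gdiv_le_max.
  - intros b Hb. apply Hb. exists ((1 + a) / 2). split; [lra|].
    rewrite g_div_eq_gdiv by lra. symmetry. apply gdiv_mid.
Qed.

Lemma ddiamond_lt_iff k A a (d : R) :
  Rbar_lt (ddiamond k A a) d <->
  exists x, 0 < x < d /\
    forall v, 0 <= v <= A -> x * (k + 1) * (A - v) - g A a >= - g v a.
Proof.
  unfold ddiamond.
  set (E := fun x => 0 < x /\
    forall v, 0 <= v <= A -> x * (k + 1) * (A - v) - g A a >= - g v a).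
  destruct (Glb_Rbar_correct E) as [Hlb Hglb]. split.
  - intros Hlt. apply NNPP. intros Hnone.
    assert (Hle : Rbar_le d (Glb_Rbar E)).
    { apply Hglb. intros x Hx. simpl. apply Rnot_lt_le. intros Hxd.
      apply Hnone. exists x. destruct Hx. split; [lra|assumption]. }
    exact (Rbar_lt_not_le _ _ Hlt Hle).
  - intros [x [Hx Hadm]]. apply Rbar_le_lt_trans with x.
    + apply Hlb. split; [lra|exact Hadm].
    + simpl. lra.
Qed.

Lemma admissible_secant_sup k a A x : 0 <= a < A -> A < 1 ->
  (forall v, 0 <= v <= A -> x * (k + 1) * (A - v) - g A a >= - g v a) ->
  exists A', a < A' < 1 /\ gdiv a A' = gdiv a A /\ secant_sup a A' <= x * (k + 1).
Proof.
  intros Ha HA Hadm.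
  assert (Hsec : forall v, 0 <= v < A -> secant a A v <= x * (k + 1)).
  { intros v Hv. specialize (Hadm v ltac:(lra)).
    pose proof (g_sub_secant a A v).
    apply (Rmult_le_reg_l (A - v)); nra. }
  destruct (Rlt_le_dec (1 + a) (3 * A)).
  - exists A. split; [lra|split; [reflexivity|]].
    rewrite <- secant_argmax. apply Hsec. lra.
  - exists (1 + a - A). split; [lra|split; [apply gdiv_reflect|]].
    apply Rle_trans with (secant a A (A / 2)).
    + apply secant_sup_reflect; lra.
    + apply Hsec. lra.
Qed.

Lemma secant_sup_admissible k a A x : secant_sup a A <= x * (k + 1) ->
  forall v, 0 <= v <= A -> x * (k + 1) * (A - v) - g A a >= - g v a.
Proof.
  intros HS v Hv. pose proof (g_sub_secant a A v). pose proof (secant_le_sup a A v).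
  assert (0 <= (A - v) * (x * (k + 1) - secant a A v)) by (apply Rmult_le_pos; lra).
  nra.
Qed.

Lemma Dset_minus_iff_secant k a d : 0 < k ->
  Dset_minus k a d <->
  inH a d /\ exists A, a < A < 1 /\ secant_sup a A < (k + 1) * d /\ d < gdiv a A.
Proof.
  intros Hk. unfold Dset_minus. split.
  - intros [[Ha Hd] [A [HA [Hdd Hg]]]]. split; [split; assumption|].
    rewrite g_div_eq_gdiv in Hg by lra.
    apply ddiamond_lt_iff in Hdd. destruct Hdd as [x [Hx Hadm]].
    destruct (admissible_secant_sup k a A x ltac:(lra) ltac:(lra) Hadm) as [A' [HA' [Heq HS]]].
    exists A'. split; [assumption|split; [nra|lra]].
  - intros [[Ha Hd] [A [HA [HS Hg]]]]. split; [split; assumption|].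
    exists A. split; [assumption|split].
    + apply ddiamond_lt_iff. exists (Rmax (d / 2) (secant_sup a A / (k + 1))).
      assert (HSd : secant_sup a A / (k + 1) < d)
        by (apply (Rmult_lt_reg_r (k + 1)); [lra|]; field_simplify; lra).
      split.
      * split; [apply Rlt_le_trans with (d / 2); [lra|apply Rmax_l]|].
        apply Rmax_lub_lt; lra.
      * apply secant_sup_admissible.
        assert (secant_sup a A = secant_sup a A / (k + 1) * (k + 1)) by (field; lra).
        pose proof (Rmax_r (d / 2) (secant_sup a A / (k + 1))). nra.
    + rewrite g_div_eq_gdiv by lra. assumption.
Qed.

Lemma continuous_lt_left (f : R -> R) lo x c :
  lo < x -> continuous f x -> f x < c -> exists y, lo < y < x /\ f y < c.
Proof.
  intros Hlo Hf Hc.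
  destruct (Hf _ (locally_ball (f x) (mkposreal _ (proj2 (Rlt_0_minus _ _) Hc)))) as [del Hdel].
  pose proof (cond_pos del).
  set (y := x - Rmin del (x - lo) / 2).
  assert (Hmin : 0 < Rmin del (x - lo) <= x - lo) by (split; [apply Rmin_glb_lt|apply Rmin_r]; lra).
  assert (Hball : ball x del y).
  { apply Rabs_lt_between'. pose proof (Rmin_l del (x - lo)). unfold y. lra. }
  specialize (Hdel y Hball). apply Rabs_lt_between' in Hdel. simpl in Hdel.
  exists y. split; [unfold y; lra | lra].
Qed.

Lemma secant_window_sound k a d A : 0 < k -> 0 <= a -> a < A < 1 ->
  secant_sup a A < (k + 1) * d -> d < gdiv a A ->
  a < a_star k /\ dmin a k < d /\ d < dmax a k.
Proof.
  intros Hk Ha HA HS Hg.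
  assert (Hgap : secant_sup a A < (k + 1) * gdiv a A) by nra.
  assert (Has : a < a_star k).
  { apply Rnot_le_lt. intros Hge.
    assert (Hd : disc a k <= 0).
    { apply Rnot_lt_le. rewrite disc_pos_iff by lra. lra. }
    pose proof (secant_sup_ge_gdiv a k A Hk Hd). lra. }
  assert (Hd : 0 <= disc a k) by (apply disc_nonneg_iff; lra).
  apply secant_sup_lt_gdiv_iff in Hgap as HAroots; [|lra|assumption].
  split; [assumption|split].
  - rewrite <- gdiv_root_hi by assumption.
    pose proof (secant_sup_root_hi a k Hk Hd).
    pose proof (mid_le_root_hi a k Hk Ha). pose proof (root_sum_ge a k Hk ltac:(lra)).
    assert (secant_sup a (root_hi a k) <= secant_sup a A) by (apply secant_sup_antitone; lra).
    nra.
  - rewrite dmax_eq by lra. apply Rlt_le_trans with (gdiv a A); [assumption|].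
    apply gdiv_le_Rmax. lra.
Qed.

Lemma secant_window_complete k a d : 0 < k -> 0 <= a < a_star k -> 0 < d ->
  dmin a k < d < dmax a k ->
  exists A, a < A < 1 /\ secant_sup a A < (k + 1) * d /\ d < gdiv a A.
Proof.
  intros Hk Ha Hd [Hlo Hhi]. pose proof (a_star_bounds k Hk).
  assert (Hdisc : 0 <= disc a k) by (apply disc_nonneg_iff; lra).
  rewrite dmax_eq in Hhi by lra.
  set (M := Rmax (root_lo a k) ((1 + a) / 2)) in Hhi.
  assert (HM : root_lo a k <= M /\ (1 + a) / 2 <= M) by (split; [apply Rmax_l|apply Rmax_r]).
  pose proof (gdiv_le_max a M).
  destruct (gdiv_root a d ltac:(lra) ltac:(lra)) as [b [Hb Hbd]].
  assert (HMb : M < b).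
  { apply Rnot_le_lt. intros Hle. pose proof (gdiv_antitone a b M ltac:(lra)). lra. }
  pose proof (mid_le_root_hi a k Hk ltac:(lra)).
  assert (Hbhi : b < root_hi a k).
  { apply Rnot_le_lt. intros Hle. pose proof (gdiv_antitone a (root_hi a k) b ltac:(lra)).
    rewrite gdiv_root_hi in * by assumption. lra. }
  assert (HSb : secant_sup a b < (k + 1) * d).
  { rewrite <- Hbd. apply secant_sup_lt_gdiv_iff; [assumption|assumption|lra]. }
  assert (Hcont : continuous (secant_sup a) b).
  { apply (ex_derive_continuous (secant_sup a)). unfold secant_sup. auto_derive. exact I. }
  destruct (continuous_lt_left _ ((1 + a) / 2) b _ ltac:(lra) Hcont HSb) as [A [HA HSA]].
  exists A. split; [lra|split; [assumption|]].
  rewrite <- Hbd. apply gdiv_decreasing. lra.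
Qed.

Lemma dmin_nonneg a k : 0 < k -> 0 <= a <= a_star k -> 0 <= dmin a k.
Proof.
  intros Hk Ha. pose proof (a_star_bounds k Hk).
  assert (Hd : 0 <= disc a k) by (apply disc_nonneg_iff; lra).
  rewrite <- gdiv_root_hi by assumption.
  pose proof (mid_le_root_hi a k Hk ltac:(lra)). pose proof (root_hi_le_1 a k Hk ltac:(lra) Hd).
  unfold gdiv. apply Rmult_le_pos; lra.
Qed.

Lemma dmin_le_dmax a k : 0 < k -> 0 <= a <= a_star k -> dmin a k <= dmax a k.
Proof.
  intros Hk Ha. pose proof (a_star_bounds k Hk).
  assert (Hd : 0 <= disc a k) by (apply disc_nonneg_iff; lra).
  rewrite <- gdiv_root_hi, dmax_eq by assumption.
  apply gdiv_le_Rmax, root_lo_le_root_hi, Hk.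
Qed.

Lemma dmax_le_dminus a k : 0 < k -> 0 <= a <= a_star k -> dmax a k <= dminus a.
Proof.
  intros Hk Ha. pose proof (a_star_bounds k Hk).
  rewrite dmax_eq, dminus_eq by lra. apply gdiv_le_max.
Qed.

Lemma dmax_a_star k : 0 < k -> dmax (a_star k) k = dmin (a_star k) k.
Proof.
  intros Hk. pose proof (a_star_bounds k Hk). pose proof (disc_a_star k Hk) as Hd.
  rewrite dmax_eq, root_lo_eq_root_hi, Rmax_left by (try apply mid_le_root_hi; lra).
  apply gdiv_root_hi; lra.
Qed.

Section RealContinuity.
Context {U : UniformSpace}.
Implicit Types (f h : U -> R) (p : U).

Lemma continuous_Rplus f h p :
  continuous f p -> continuous h p -> continuous (fun x => f x + h x) p.
Proof. exact (continuous_plus f h p). Qed.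

Lemma continuous_Ropp f p : continuous f p -> continuous (fun x => - f x) p.
Proof. exact (continuous_opp f p). Qed.

Lemma continuous_Rminus f h p :
  continuous f p -> continuous h p -> continuous (fun x => f x - h x) p.
Proof. intros. apply continuous_Rplus; [|apply continuous_Ropp]; assumption. Qed.

Lemma continuous_Rmult f h p :
  continuous f p -> continuous h p -> continuous (fun x => f x * h x) p.
Proof. exact (continuous_mult f h p). Qed.

Lemma continuous_Rdiv f h p :
  continuous f p -> continuous h p -> h p <> 0 -> continuous (fun x => f x / h x) p.
Proof.
  intros Hf Hh Hp. apply continuous_Rmult; [assumption|].
  apply (continuous_comp h Rinv); [assumption|]. apply continuous_Rinv, Hp.
Qed.

Lemma continuous_pow f p n : continuous f p -> continuous (fun x => f x ^ n) p.
Proof.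
  intros Hf. induction n as [|n IH]; simpl.
  - apply continuous_const.
  - apply continuous_Rmult; assumption.
Qed.

Lemma continuous_sqrt_comp f p : continuous f p -> continuous (fun x => sqrt (f x)) p.
Proof. intros Hf. apply (continuous_comp f sqrt); [assumption|apply continuous_sqrt]. Qed.

Lemma continuous_Rmax f h p :
  continuous f p -> continuous h p -> continuous (fun x => Rmax (f x) (h x)) p.
Proof.
  intros Hf Hh.
  apply continuous_ext with (f := fun x => (f x + h x + Rabs (f x - h x)) / 2).
  - intros x. unfold Rmax. destruct (Rle_dec (f x) (h x));
      [rewrite Rabs_left1 | rewrite Rabs_right]; lra.
  - apply continuous_Rdiv; [|apply continuous_const|lra].
    apply continuous_Rplus; [apply continuous_Rplus; assumption|].
    apply (continuous_comp (fun x => f x - h x) Rabs);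
      [apply continuous_Rminus; assumption | apply continuous_Rabs].
Qed.

End RealContinuity.

Ltac continuity_step :=
  match goal with
  | |- continuous (fun _ => ?c) _ => apply continuous_const
  | |- continuous (fun x => fst x) (_, _) => apply continuous_fst
  | |- continuous (fun x => snd x) (_, _) => apply continuous_snd
  | |- continuous (fun x => @?F x + @?G x) _ => apply (continuous_Rplus F G)
  | |- continuous (fun x => @?F x - @?G x) _ => apply (continuous_Rminus F G)
  | |- continuous (fun x => @?F x * @?G x) _ => apply (continuous_Rmult F G)
  | |- continuous (fun x => @?F x / @?G x) _ => apply (continuous_Rdiv F G)
  | |- continuous (fun x => - @?F x) _ => apply (continuous_Ropp F)
  | |- continuous (fun x => @?F x ^ _) _ => apply (continuous_pow F)
  | |- continuous (fun x => sqrt (@?F x)) _ => apply (continuous_sqrt_comp F)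
  | |- continuous (fun x => Rmax (@?F x) (@?G x)) _ => apply (continuous_Rmax F G)
  end.

Lemma cont_on2_of_continuous (S : R -> R -> Prop) (f : R -> R -> R) (G : R * R -> R) :
  (forall a k, S a k -> f a k = G (a, k)) ->
  (forall a k, S a k -> continuous G (a, k)) -> cont_on2 S f.
Proof.
  intros HfG HG a k HS eps Heps.
  destruct (HG a k HS _ (locally_ball (G (a, k)) (mkposreal eps Heps))) as [del Hdel].
  exists del. split; [apply cond_pos|].
  intros a' k' HS' Ha Hk. rewrite !HfG by assumption.
  apply (Hdel (a', k')). split; assumption.
Qed.

Lemma dmin_continuous : cont_on2 dom_ak dmin.
Proof.
  apply (cont_on2_of_continuous _ _ (fun p => dmin (fst p) (snd p))); [reflexivity|].
  intros a k [Hk _]. unfold dmin. repeat continuity_step.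
  cbn [fst snd]. apply pow_nonzero. lra.
Qed.

Lemma dmax_continuous : cont_on2 dom_ak dmax.
Proof.
  apply (cont_on2_of_continuous _ _
    (fun p => gdiv (fst p) (Rmax (root_lo (fst p) (snd p)) ((1 + fst p) / 2)))).
  - intros a k [Hk Ha]. apply dmax_eq; assumption.
  - intros a k [Hk _]. unfold gdiv, root_lo, root_gap, disc. repeat continuity_step.
    all: simpl; lra.
Qed.

Theorem proposition2p9 :
  (cont_on2 dom_ak dmin /\ cont_on2 dom_ak dmax) /\
  (forall k, 0 < k ->
     (forall a, 0 <= a <= a_star k ->
        0 <= dmin a k /\ dmin a k <= dmax a k /\ dmax a k <= dminus a) /\
     dmax (a_star k) k = dmin (a_star k) k /\
     (forall a d, Dset_minus k a d <->
        (inH a d /\ a < a_star k /\ dmin a k < d /\ d < dmax a k))).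
Proof.
  split; [split; [exact dmin_continuous | exact dmax_continuous]|].
  intros k Hk. split; [|split].
  - intros a Ha. split; [|split].
    + apply dmin_nonneg; assumption.
    + apply dmin_le_dmax; assumption.
    + apply dmax_le_dminus; assumption.
  - apply dmax_a_star, Hk.
  - intros a d. rewrite Dset_minus_iff_secant by assumption. split.
    + intros [[Ha Hd] [A [HA [HS Hg]]]].
      split; [split; assumption|]. apply (secant_window_sound k a d A); lra.
    + intros [[Ha Hd] [Has Hwin]]. split; [split; assumption|].
      apply secant_window_complete; lra.
Qed.
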